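(* Let $P$ be a finite set of points in the Euclidean plane with $|P|$ even, and let $M$ be a $2$-local maximum perfect matching on $P$. Let $M^*$ be a maximum-length perfect matching on $P$. Then $w(M)\geqslant \sqrt{3/7}\, w(M^* )$.
   Context: A perfect matching on a finite point set $P$ in the plane is a partition of $P$ into pairs; each pair $\{a,b\}$ is regarded as the straight-line segment (edge) $ab$. For a set $E$ of segments, $w(E)$ denotes the sum of the Euclidean lengths of its segments. A perfect matching $M$ on $P$ is a maximum-length (globally maximum) matching if $w(M)\geqslant w(M')$ for every perfect matching $M'$ on $P$. For an integer $k$, a perfect matching $M$ is $k$-local maximum if for every subset $M'=\{a_1b_1,\dots,a_kb_k\}$ of $k$ edges of $M$, $M'$ is a maximum-length perfect matching on the point set $\{a_1,b_1,\dots,a_k,b_k\}$. *)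

From Stdlib Require Import Reals List Permutation.
Open Scope R_scope.

Definition point := (R * R)%type.
Definition edge := (point * point)%type.

Definition dist (a b : point) : R :=
  sqrt ((fst a - fst b) ^ 2 + (snd a - snd b) ^ 2).

Fixpoint endpoints (M : list edge) : list point :=
  match M with
  | nil => nil
  | (a, b) :: M' => a :: b :: endpoints M'
  end.

Fixpoint weight (M : list edge) : R :=
  match M with
  | nil => 0
  | (a, b) :: M' => dist a b + weight M'
  end.

(* M is a perfect matching on the point set P (given as a duplicate-free list):
   the endpoints of the edges of M are exactly the points of P, each once. *)
Definition perfect_matching (P : list point) (M : list edge) : Prop :=
  Permutation (endpoints M) P.

Definition max_matching (P : list point) (M : list edge) : Prop :=
  perfect_matching P M /\
  forall M', perfect_matching P M' -> weight M' <= weight M.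

(* k-local maximum: every k-subset M' of edges of M is a maximum-length
   perfect matching on the 2k endpoints of M'. *)
Definition k_local_max (k : nat) (P : list point) (M : list edge) : Prop :=
  perfect_matching P M /\
  forall M' rest, length M' = k -> Permutation M (M' ++ rest) ->
    max_matching (endpoints M') M'.

From Stdlib Require Import Reals Rgeom RList List Permutation Lra Psatz ClassicalEpsilon.
Import ListNotations.
Open Scope R_scope.

(* If ab and cd are edges of a 2-local maximum matching, then |ac| + |bd| <= |ab| + |cd|,
   so the midpoints satisfy |m_ab m_cd| <= |ab|/2 + |cd|/2: the disks having the edges of M
   as diameters pairwise intersect.  Pairwise intersecting disks, enlarged by the factor
   2/sqrt 3 about their centres, have a common point O.  For an edge ab with
   |O m_ab| <= |ab|/sqrt 3, the median formula gives |aO| + |bO| <= sqrt (7/3) |ab|.  Every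
   edge xy of M* has |xy| <= |xO| + |yO|, and summing over the common vertex set P gives
   w(M^star) <= sum_p |pO| <= sqrt (7/3) w(M).

   The common point O is a minimiser of max_D |O c_D|^2 / r_D^2.  If that minimum exceeded
   4/3, the centres of the disks attaining it could not all lie in an open half-plane seen
   from O (otherwise O could be moved towards them), so two of them would be seen under an
   angle of at least 120 degrees; but then the two disks would be too far apart to meet. *)

Lemma Rdiv_le_iff (a b t : R) : 0 < b -> (a / b <= t <-> a <= t * b).
Proof.
  intros Hb; split; intros H.
  - replace a with (a / b * b) by (field; lra).
    apply Rmult_le_compat_r; lra.
  - replace t with (t * b / b) by (field; lra).
    unfold Rdiv; apply Rmult_le_compat_r; [left; apply Rinv_0_lt_compat|]; lra.
Qed.

Lemma Rdiv_lt_iff (a b t : R) : 0 < b -> (t < a / b <-> t * b < a).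
Proof.
  intros Hb; split; intros H.
  - destruct (Rle_lt_dec a (t * b)) as [Hle|]; [|assumption].
    apply (Rdiv_le_iff a b t Hb) in Hle; lra.
  - destruct (Rle_lt_dec (a / b) t) as [Hle|]; [|assumption].
    apply (Rdiv_le_iff a b t Hb) in Hle; lra.
Qed.

Lemma MaxRlist_map_ge {A : Type} (f : A -> R) (l : list A) (a : A) :
  In a l -> f a <= MaxRlist (map f l).
Proof. intros Ha; apply MaxRlist_P1, in_map, Ha. Qed.

Lemma MaxRlist_map_attained {A : Type} (f : A -> R) (l : list A) :
  l <> [] -> exists a, In a l /\ MaxRlist (map f l) = f a.
Proof.
  intros Hl; destruct l as [|a0 l']; [congruence|].
  assert (Hin : In (MaxRlist (map f (a0 :: l'))) (map f (a0 :: l'))).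
  { apply MaxRlist_P2; exists (f a0); left; reflexivity. }
  apply in_map_iff in Hin as [a [Ha Hin]].
  exists a; split; [exact Hin | symmetry; exact Ha].
Qed.

Lemma list_argmin {A : Type} (f : A -> R) (l : list A) :
  l <> [] -> exists a, In a l /\ forall b, In b l -> f a <= f b.
Proof.
  intros Hl; destruct (MaxRlist_map_attained (fun a => - f a) l Hl) as [a [Ha Hmax]].
  exists a; split; [exact Ha|]; intros b Hb.
  pose proof (MaxRlist_map_ge (fun a => - f a) l b Hb); lra.
Qed.

Definition sqdist (a b : point) : R := (fst a - fst b) ^ 2 + (snd a - snd b) ^ 2.

Lemma sqdist_ge_0 (a b : point) : 0 <= sqdist a b.
Proof.
  unfold sqdist; pose proof (pow2_ge_0 (fst a - fst b)); pose proof (pow2_ge_0 (snd a - snd b)).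
  lra.
Qed.

Lemma dist_pow2 (a b : point) : dist a b ^ 2 = sqdist a b.
Proof. apply pow2_sqrt, sqdist_ge_0. Qed.

Lemma dist_ge_0 (a b : point) : 0 <= dist a b.
Proof. apply sqrt_pos. Qed.

Lemma dist_gt_0 (a b : point) : a <> b -> 0 < dist a b.
Proof.
  destruct a as [a1 a2], b as [b1 b2]; intros Hab; apply sqrt_lt_R0.
  destruct (Req_dec a1 b1) as [<-|H1]; [destruct (Req_dec a2 b2) as [<-|H2]|].
  - congruence.
  - pose proof (Rsqr_pos_lt (a2 - b2)). unfold Rsqr in *; simpl; nra.
  - pose proof (Rsqr_pos_lt (a1 - b1)). pose proof (pow2_ge_0 (a2 - b2)).
    unfold Rsqr in *; simpl; nra.
Qed.

Lemma dist_euc_dist (a b : point) : dist a b = dist_euc (fst a) (snd a) (fst b) (snd b).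
Proof. unfold dist, dist_euc, Rsqr; f_equal; ring. Qed.

Lemma dist_sym (a b : point) : dist a b = dist b a.
Proof. rewrite !dist_euc_dist; apply distance_symm. Qed.

Lemma dist_triangle (a b c : point) : dist a c <= dist a b + dist b c.
Proof. rewrite !dist_euc_dist; apply triangle. Qed.

Lemma dist_refl (a : point) : dist a a = 0.
Proof. rewrite dist_euc_dist; apply distance_refl. Qed.

Definition mid (a b : point) : point := ((fst a + fst b) / 2, (snd a + snd b) / 2).

Lemma mid_comm (a b : point) : mid a b = mid b a.
Proof. unfold mid; f_equal; field. Qed.

Lemma dist_mid_mid_r (a b c : point) : dist (mid a b) (mid c b) = dist a c / 2.
Proof.
  unfold dist, mid; simpl.
  replace (_ + _) with (((fst a - fst c) ^ 2 + (snd a - snd c) ^ 2) / 2 ^ 2) by field.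
  rewrite sqrt_div_alt, sqrt_pow2 by lra; reflexivity.
Qed.

Lemma dist_mid_mid (a b c d : point) : dist (mid a b) (mid c d) <= (dist a c + dist b d) / 2.
Proof.
  eapply Rle_trans; [apply (dist_triangle _ (mid c b))|].
  rewrite dist_mid_mid_r, (mid_comm c b), (mid_comm c d), dist_mid_mid_r; lra.
Qed.

Lemma sqdist_median (a b O : point) :
  sqdist a O + sqdist b O = 2 * sqdist O (mid a b) + sqdist a b / 2.
Proof. unfold sqdist, mid; simpl; field. Qed.

Lemma dist_sum_le_of_near_mid (a b O : point) :
  sqdist O (mid a b) <= 4 / 3 * (dist a b / 2) ^ 2 ->
  dist a O + dist b O <= sqrt (7 / 3) * dist a b.
Proof.
  intros Hnear.
  pose proof (sqdist_median a b O) as Hmed.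
  rewrite <- (dist_pow2 a O), <- (dist_pow2 b O), <- (dist_pow2 a b) in Hmed.
  apply Rsqr_incr_0_var.
  - unfold Rsqr.
    replace (sqrt (7 / 3) * dist a b * (sqrt (7 / 3) * dist a b))
      with (sqrt (7 / 3) ^ 2 * dist a b ^ 2) by ring.
    rewrite pow2_sqrt by lra.
    pose proof (pow2_ge_0 (dist a O - dist b O)); nra.
  - apply Rmult_le_pos; [apply sqrt_pos | apply dist_ge_0].
Qed.

Fixpoint sum_dist (O : point) (l : list point) : R :=
  match l with
  | [] => 0
  | p :: l' => dist p O + sum_dist O l'
  end.

Lemma sum_dist_perm (O : point) (l l' : list point) :
  Permutation l l' -> sum_dist O l = sum_dist O l'.
Proof. induction 1; simpl; lra. Qed.

Lemma weight_le_sum_dist (O : point) (M : list edge) : weight M <= sum_dist O (endpoints M).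
Proof.
  induction M as [|[a b] M IH]; simpl; [lra|].
  pose proof (dist_triangle a O b); rewrite (dist_sym O b) in *; lra.
Qed.

Lemma sum_dist_endpoints_le (O : point) (k : R) (M : list edge) :
  (forall a b, In (a, b) M -> dist a O + dist b O <= k * dist a b) ->
  sum_dist O (endpoints M) <= k * weight M.
Proof.
  induction M as [|[a b] M IH]; intros Hk; simpl; [lra|].
  pose proof (Hk a b (or_introl eq_refl)).
  assert (sum_dist O (endpoints M) <= k * weight M)
    by (apply IH; intros; apply Hk; right; assumption).
  lra.
Qed.

Lemma weight_le_of_star_bound (P : list point) (M M' : list edge) (O : point) (k : R) :
  perfect_matching P M -> perfect_matching P M' ->
  (forall a b, In (a, b) M -> dist a O + dist b O <= k * dist a b) ->
  weight M' <= k * weight M.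
Proof.
  intros HM HM' Hk.
  eapply Rle_trans; [apply (weight_le_sum_dist O)|].
  rewrite (sum_dist_perm O _ _ HM'), <- (sum_dist_perm O _ _ HM).
  apply sum_dist_endpoints_le, Hk.
Qed.

Lemma endpoints_NoDup_neq (M : list edge) (a b : point) :
  NoDup (endpoints M) -> In (a, b) M -> a <> b.
Proof.
  induction M as [|[x y] M IH]; simpl; intros Hnd Hin; [contradiction|].
  inversion Hnd as [|? ? Hx Hnd']; subst; inversion Hnd' as [|? ? Hy Hnd'']; subst.
  destruct Hin as [[= -> ->]|Hin].
  - intros ->; apply Hx; left; reflexivity.
  - exact (IH Hnd'' Hin).
Qed.

Lemma Permutation_two_of_In {A : Type} (l : list A) (x y : A) :
  In x l -> In y l -> x <> y -> exists rest, Permutation l ([x; y] ++ rest).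
Proof.
  intros Hx Hy Hxy.
  destruct (in_split _ _ Hx) as [l1 [l2 ->]].
  assert (Hy' : In y (l1 ++ l2)).
  { apply in_app_or in Hy as [Hy|[->|Hy]]; [| congruence |]; apply in_or_app; auto. }
  destruct (in_split _ _ Hy') as [l3 [l4 E]].
  exists (l3 ++ l4); simpl.
  rewrite <- Permutation_middle, E; apply perm_skip, Permutation_sym, Permutation_middle.
Qed.

Lemma two_local_max_exchange (P : list point) (M : list edge) (a b c d : point) :
  k_local_max 2 P M -> In (a, b) M -> In (c, d) M -> (a, b) <> (c, d) ->
  dist a c + dist b d <= dist a b + dist c d.
Proof.
  intros [_ Hloc] Hab Hcd Hne.
  destruct (Permutation_two_of_In M _ _ Hab Hcd Hne) as [rest Hperm].
  destruct (Hloc [(a, b); (c, d)] rest eq_refl Hperm) as [_ Hmax].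
  specialize (Hmax [(a, c); (b, d)]); simpl in Hmax.
  assert (Hswap : perfect_matching [a; b; c; d] [(a, c); (b, d)])
    by (apply perm_skip, perm_swap).
  specialize (Hmax Hswap); lra.
Qed.

Definition clamp (a b x : R) : R := Rmax a (Rmin b x).

Lemma clamp_in (a b x : R) : a <= b -> a <= clamp a b x <= b.
Proof. intros; unfold clamp, Rmax, Rmin; repeat destruct Rle_dec; lra. Qed.

Lemma clamp_id (a b x : R) : a <= x <= b -> clamp a b x = x.
Proof. intros; unfold clamp, Rmax, Rmin; repeat destruct Rle_dec; lra. Qed.

Lemma clamp_contract (a b x x' : R) :
  a <= b -> Rabs (clamp a b x - clamp a b x') <= Rabs (x - x').
Proof.
  intros; unfold clamp, Rmax, Rmin, Rabs; repeat destruct Rle_dec; repeat destruct Rcase_abs; lra.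
Qed.

Lemma lipschitz_continuity_pt (f : R -> R) (C : R) :
  0 <= C -> (forall x x', f x <= f x' + C * Rabs (x - x')) -> forall x, continuity_pt f x.
Proof.
  intros HC Hlip x eps Heps.
  exists (eps / (C + 1)); split; [apply Rdiv_lt_0_compat; lra|].
  intros x' [_ Hx']; simpl in *; unfold R_dist in *.
  assert (Hdelta : C * Rabs (x' - x) < eps).
  { apply Rle_lt_trans with (C * (eps / (C + 1))); [apply Rmult_le_compat_l; lra|].
    replace (C * (eps / (C + 1))) with (eps - eps / (C + 1)) by (field; lra).
    pose proof (Rdiv_lt_0_compat eps (C + 1) Heps ltac:(lra)); lra. }
  pose proof (Hlip x x'); pose proof (Hlip x' x).
  rewrite (Rabs_minus_sym x' x) in *.
  apply Rabs_def1; lra.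
Qed.

(* Clamping makes f globally Lipschitz; then x |-> min_y f x y is Lipschitz as well, so two
   one-variable minimisations give the minimum over the rectangle. *)
Lemma rectangle_min (f : R -> R -> R) (a b c d C : R) :
  a <= b -> c <= d -> 0 <= C ->
  (forall x y x' y', a <= x <= b -> c <= y <= d -> a <= x' <= b -> c <= y' <= d ->
     f x y <= f x' y' + C * (Rabs (x - x') + Rabs (y - y'))) ->
  exists x0 y0, a <= x0 <= b /\ c <= y0 <= d /\
    forall x y, a <= x <= b -> c <= y <= d -> f x0 y0 <= f x y.
Proof.
  intros Hab Hcd HC Hlip.
  set (g x y := f (clamp a b x) (clamp c d y)).
  assert (Hg : forall x y x' y', g x y <= g x' y' + C * (Rabs (x - x') + Rabs (y - y'))).
  { intros x y x' y'; unfold g.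
    eapply Rle_trans; [apply Hlip; apply clamp_in; assumption|].
    pose proof (clamp_contract a b x x' Hab); pose proof (clamp_contract c d y y' Hcd).
    apply Rplus_le_compat_l, Rmult_le_compat_l; lra. }
  assert (Hcol : forall x, exists y, c <= y <= d /\ forall y', c <= y' <= d -> g x y <= g x y').
  { intros x.
    destruct (continuity_ab_min (g x) c d Hcd) as [y [Hy Hyin]].
    - intros y _; apply (lipschitz_continuity_pt _ C HC); intros y1 y2.
      specialize (Hg x y1 x y2); rewrite Rminus_diag, Rabs_R0 in Hg; lra.
    - exists y; auto. }
  destruct (choice _ Hcol) as [ymin Hymin].
  set (h x := g x (ymin x)).
  assert (Hh : forall x x', h x <= h x' + C * Rabs (x - x')).
  { intros x x'; unfold h.
    destruct (Hymin x) as [_ Hmin]; destruct (Hymin x') as [Hin' _].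
    specialize (Hg x (ymin x') x' (ymin x')); rewrite Rminus_diag, Rabs_R0 in Hg.
    specialize (Hmin _ Hin'); lra. }
  destruct (continuity_ab_min h a b Hab) as [x0 [Hx0 Hx0in]].
  { intros x _; exact (lipschitz_continuity_pt h C HC Hh x). }
  destruct (Hymin x0) as [Hy0in _].
  exists x0, (ymin x0); split; [exact Hx0in|split; [exact Hy0in|]].
  intros x y Hx Hy.
  assert (Hgmin : g x0 (ymin x0) <= g x y).
  { apply Rle_trans with (h x); [apply Hx0, Hx | apply (proj2 (Hymin x)), Hy]. }
  unfold g in Hgmin; rewrite !clamp_id in Hgmin by assumption; exact Hgmin.
Qed.

Record disk := Disk { center : point; radius : R }.

Definition rel_sqdist (O : point) (D : disk) : R := sqdist O (center D) / radius D ^ 2.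

Definition max_rel_sqdist (L : list disk) (O : point) : R := MaxRlist (map (rel_sqdist O) L).

Lemma rel_sqdist_le_iff (O : point) (D : disk) (t : R) :
  0 < radius D -> (rel_sqdist O D <= t <-> sqdist O (center D) <= t * radius D ^ 2).
Proof. intros Hr; apply Rdiv_le_iff, pow_lt, Hr. Qed.

Lemma rel_sqdist_ge_0 (O : point) (D : disk) : 0 < radius D -> 0 <= rel_sqdist O D.
Proof.
  intros Hr; apply Rle_mult_inv_pos; [apply sqdist_ge_0 | apply pow_lt, Hr].
Qed.

Lemma max_rel_sqdist_ge (L : list disk) (O : point) (D : disk) :
  In D L -> rel_sqdist O D <= max_rel_sqdist L O.
Proof. apply MaxRlist_map_ge. Qed.

Lemma max_rel_sqdist_attained (L : list disk) (O : point) :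
  L <> [] -> exists D, In D L /\ max_rel_sqdist L O = rel_sqdist O D.
Proof. apply MaxRlist_map_attained. Qed.

Lemma sq_sub_lipschitz (a b e x x' : R) :
  a <= x <= b -> a <= x' <= b ->
  (x - e) ^ 2 <= (x' - e) ^ 2 + 2 * (Rabs a + Rabs b + Rabs e) * Rabs (x - x').
Proof.
  intros Hx Hx'.
  replace ((x - e) ^ 2) with ((x' - e) ^ 2 + (x - x') * (x + x' - 2 * e)) by ring.
  apply Rplus_le_compat_l.
  eapply Rle_trans; [apply Rle_abs|]; rewrite Rabs_mult, Rmult_comm.
  apply Rmult_le_compat_r; [apply Rabs_pos|].
  unfold Rabs; repeat destruct Rcase_abs; lra.
Qed.

Lemma sqdist_lipschitz (a b c d x y x' y' : R) (Q : point) :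
  a <= x <= b -> c <= y <= d -> a <= x' <= b -> c <= y' <= d ->
  sqdist (x, y) Q <= sqdist (x', y') Q
    + 2 * (Rabs a + Rabs b + Rabs c + Rabs d + Rabs (fst Q) + Rabs (snd Q))
        * (Rabs (x - x') + Rabs (y - y')).
Proof.
  intros Hx Hy Hx' Hy'; unfold sqdist; simpl.
  pose proof (sq_sub_lipschitz a b (fst Q) x x' Hx Hx').
  pose proof (sq_sub_lipschitz c d (snd Q) y y' Hy Hy').
  pose proof (Rabs_pos a); pose proof (Rabs_pos b).
  pose proof (Rabs_pos c); pose proof (Rabs_pos d).
  pose proof (Rabs_pos (fst Q)); pose proof (Rabs_pos (snd Q)).
  pose proof (Rabs_pos (x - x')); pose proof (Rabs_pos (y - y')).
  nra.
Qed.

Lemma max_rel_sqdist_lipschitz (L : list disk) (a b c d : R) :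
  L <> [] -> (forall D, In D L -> 0 < radius D) ->
  exists C, 0 <= C /\ forall x y x' y',
    a <= x <= b -> c <= y <= d -> a <= x' <= b -> c <= y' <= d ->
    max_rel_sqdist L (x, y) <= max_rel_sqdist L (x', y') + C * (Rabs (x - x') + Rabs (y - y')).
Proof.
  intros HL Hr.
  set (lip D := 2 * (Rabs a + Rabs b + Rabs c + Rabs d
                     + Rabs (fst (center D)) + Rabs (snd (center D))) / radius D ^ 2).
  assert (Hlip0 : forall D, In D L -> 0 <= lip D).
  { intros D HD; apply Rle_mult_inv_pos; [|apply pow_lt, Hr, HD].
    pose proof (Rabs_pos a); pose proof (Rabs_pos b).
    pose proof (Rabs_pos c); pose proof (Rabs_pos d).
    pose proof (Rabs_pos (fst (center D))); pose proof (Rabs_pos (snd (center D))); lra. }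
  exists (MaxRlist (map lip L)); split.
  { destruct L as [|D0 L0]; [congruence|].
    apply Rle_trans with (lip D0); [apply Hlip0|apply MaxRlist_map_ge]; left; reflexivity. }
  intros x y x' y' Hx Hy Hx' Hy'.
  destruct (max_rel_sqdist_attained L (x, y) HL) as [D [HD ->]].
  pose proof (sqdist_lipschitz a b c d x y x' y' (center D) Hx Hy Hx' Hy') as Hsq.
  apply (Rmult_le_compat_r (/ radius D ^ 2)) in Hsq;
    [|left; apply Rinv_0_lt_compat, pow_lt, Hr, HD].
  pose proof (max_rel_sqdist_ge L (x', y') D HD).
  pose proof (MaxRlist_map_ge lip L D HD).
  pose proof (Rabs_pos (x - x')); pose proof (Rabs_pos (y - y')).
  unfold rel_sqdist, lip, Rdiv in *; nra.
Qed.

Lemma abs_le_of_sq_le (z rho : R) : 1 <= rho -> z ^ 2 <= rho -> - rho <= z <= rho.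
Proof. intros; split; nra. Qed.

Lemma max_rel_sqdist_has_min (L : list disk) :
  L <> [] -> (forall D, In D L -> 0 < radius D) ->
  exists O, forall P, max_rel_sqdist L O <= max_rel_sqdist L P.
Proof.
  intros HL Hr.
  destruct L as [|D1 L1] eqn:EL; [congruence|]; rewrite <- EL in *.
  assert (HD1 : In D1 L) by (rewrite EL; left; reflexivity).
  pose proof (Hr D1 HD1) as Hr1.
  destruct (center D1) as [c1 c2] eqn:Hc1.
  set (V := max_rel_sqdist L (c1, c2)).
  assert (HV : 0 <= V * radius D1 ^ 2).
  { apply Rmult_le_pos; [|apply pow2_ge_0].
    apply Rle_trans with (rel_sqdist (c1, c2) D1);
      [apply rel_sqdist_ge_0, Hr1 | apply max_rel_sqdist_ge, HD1]. }
  remember (V * radius D1 ^ 2 + 1) as rho eqn:Hrho.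
  destruct (max_rel_sqdist_lipschitz L (c1 - rho) (c1 + rho) (c2 - rho) (c2 + rho) HL Hr)
    as [C [HC Hlip]].
  destruct (rectangle_min (fun x y => max_rel_sqdist L (x, y)) (c1 - rho) (c1 + rho)
              (c2 - rho) (c2 + rho) C ltac:(lra) ltac:(lra) HC Hlip) as [x0 [y0 [Hx0 [Hy0 Hmin]]]].
  exists (x0, y0); intros [x y].
  (* Points near the centre of D1 lie in the rectangle; at the others D1 alone exceeds V. *)
  destruct (Rle_lt_dec (sqdist (x, y) (c1, c2)) (V * radius D1 ^ 2)) as [Hnear|Hfar].
  - unfold sqdist in Hnear; simpl in Hnear.
    pose proof (pow2_ge_0 (x - c1)); pose proof (pow2_ge_0 (y - c2)).
    pose proof (abs_le_of_sq_le (x - c1) rho ltac:(lra) ltac:(lra)).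
    pose proof (abs_le_of_sq_le (y - c2) rho ltac:(lra) ltac:(lra)).
    apply Hmin; lra.
  - apply Rle_trans with V; [apply Hmin; lra|].
    apply Rle_trans with (rel_sqdist (x, y) D1); [|apply max_rel_sqdist_ge, HD1].
    left; unfold rel_sqdist; rewrite Hc1.
    apply Rdiv_lt_iff; [apply pow_lt, Hr1 | exact Hfar].
Qed.

Definition small_enough (Q : R -> Prop) : Prop :=
  exists s0, 0 < s0 /\ forall s, 0 < s <= s0 -> Q s.

Lemma small_enough_Forall {A : Type} (Q : A -> R -> Prop) (l : list A) :
  (forall a, In a l -> small_enough (Q a)) ->
  small_enough (fun s => forall a, In a l -> Q a s).
Proof.
  induction l as [|a l IH]; intros Hl.
  - exists 1; split; [lra | intros s _ a []].
  - destruct (Hl a (or_introl eq_refl)) as [s1 [Hs1 H1]].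
    destruct IH as [s2 [Hs2 H2]]; [intros b Hb; apply Hl; right; exact Hb|].
    exists (Rmin s1 s2); split; [apply Rmin_pos; assumption|].
    intros s [Hs Hsmin] b [<-|Hb]; pose proof (Rmin_l s1 s2); pose proof (Rmin_r s1 s2).
    + apply H1; lra.
    + apply H2; [lra | exact Hb].
Qed.

Lemma small_enough_quadratic_lt (n T delta V : R) :
  0 <= V -> n < T \/ (n <= T /\ 0 < delta) ->
  small_enough (fun s => n - 2 * s * delta + s ^ 2 * V < T).
Proof.
  intros HV [Hn | [Hn Hdelta]].
  - set (K := 2 * Rabs delta + V + 1).
    assert (HK : 0 < K) by (unfold K; pose proof (Rabs_pos delta); lra).
    exists (Rmin 1 ((T - n) / K)); split; [apply Rmin_pos; [lra | apply Rdiv_lt_0_compat; lra]|].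
    intros s [Hs Hsmin].
    pose proof (Rmin_l 1 ((T - n) / K)); pose proof (Rmin_r 1 ((T - n) / K)).
    assert (HsK : s * K <= T - n).
    { replace (T - n) with ((T - n) / K * K) by (field; lra).
      apply Rmult_le_compat_r; lra. }
    assert (Hlin : - (2 * s * delta) <= 2 * s * Rabs delta).
    { pose proof (Rle_abs (- delta)); rewrite Rabs_Ropp in *; nra. }
    assert (Hquad : s ^ 2 * V <= s * V)
      by (apply Rmult_le_compat_r; [exact HV | simpl; nra]).
    unfold K in HsK; lra.
  - exists (delta / (V + 1)); split; [apply Rdiv_lt_0_compat; lra|].
    intros s [Hs Hsmax].
    assert (HsV : s * (V + 1) <= delta).
    { replace delta with (delta / (V + 1) * (V + 1)) by (field; lra).
      apply Rmult_le_compat_r; lra. }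
    nra.
Qed.

Definition dot (u v : point) : R := fst u * fst v + snd u * snd v.

Definition offset (O : point) (D : disk) : point :=
  ((fst (center D) - fst O) / radius D, (snd (center D) - snd O) / radius D).

Lemma rel_sqdist_offset (O : point) (D : disk) :
  radius D <> 0 -> rel_sqdist O D = dot (offset O D) (offset O D).
Proof. intros; unfold rel_sqdist, sqdist, dot, offset; simpl; field; assumption. Qed.

Lemma rel_sqdist_shift (O v : point) (D : disk) (s : R) :
  radius D <> 0 ->
  rel_sqdist (fst O + s * fst v, snd O + s * snd v) D
  = rel_sqdist O D - 2 * s * (dot v (offset O D) / radius D) + s ^ 2 * (dot v v / radius D ^ 2).
Proof. intros; unfold rel_sqdist, sqdist, dot, offset; simpl; field; assumption. Qed.

Lemma max_rel_sqdist_decrease (L : list disk) (O v : point) :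
  L <> [] -> (forall D, In D L -> 0 < radius D) ->
  (forall D, In D L -> rel_sqdist O D = max_rel_sqdist L O -> 0 < dot v (offset O D)) ->
  exists P, max_rel_sqdist L P < max_rel_sqdist L O.
Proof.
  intros HL Hr Hv.
  set (T := max_rel_sqdist L O).
  set (shift s := (fst O + s * fst v, snd O + s * snd v)).
  assert (Hsmall : forall D, In D L -> small_enough (fun s => rel_sqdist (shift s) D < T)).
  { intros D HD; pose proof (Hr D HD) as HrD.
    assert (Hvv : 0 <= dot v v / radius D ^ 2).
    { apply Rle_mult_inv_pos; [unfold dot; nra | apply pow_lt, HrD]. }
    assert (Hcase : rel_sqdist O D < T
                    \/ (rel_sqdist O D <= T /\ 0 < dot v (offset O D) / radius D)).
    { destruct (Rle_lt_or_eq _ _ (max_rel_sqdist_ge L O D HD)) as [Hlt|Heq]; [left; exact Hlt|].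
      right; split; [right; exact Heq | apply Rdiv_lt_0_compat; [apply Hv|]; assumption]. }
    destruct (small_enough_quadratic_lt _ _ _ _ Hvv Hcase) as [s0 [Hs0 Hs]].
    exists s0; split; [exact Hs0|]; intros s Hs'.
    unfold shift; rewrite rel_sqdist_shift by lra; apply Hs, Hs'. }
  destruct (small_enough_Forall _ L Hsmall) as [s0 [Hs0 Hs]].
  exists (shift s0).
  destruct (max_rel_sqdist_attained L (shift s0) HL) as [D [HD ->]].
  apply Hs; [lra | exact HD].
Qed.

(* The Gram matrix of three vectors of the plane is singular. *)
Lemma gram_plane (p q k : point) :
  dot p p * dot q q * dot k k + 2 * dot p q * dot k p * dot k q
  = dot k k * dot p q ^ 2 + dot q q * dot k p ^ 2 + dot p p * dot k q ^ 2.
Proof. unfold dot; ring. Qed.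

Lemma gram_equal_norms_neq (T c x y : R) :
  0 < T -> - T / 2 < c -> c <= x -> c <= y -> x + y <= 0 ->
  T * T * T + 2 * c * x * y <> T * c ^ 2 + T * x ^ 2 + T * y ^ 2.
Proof.
  intros HT Hc Hx Hy Hxy Heq.
  destruct (Rle_lt_dec 0 c) as [Hc0|Hc0].
  - assert (x = 0) by lra; assert (y = 0) by lra; subst x y.
    assert (c = 0) by lra; subst c.
    pose proof (Rmult_lt_0_compat _ _ (Rmult_lt_0_compat _ _ HT HT) HT); lra.
  - assert (Hx' : x <= - c) by lra; assert (Hy' : y <= - c) by lra.
    assert (0 <= (x - c) * (- c - x)) by (apply Rmult_le_pos; lra).
    assert (0 <= (y - c) * (- c - y)) by (apply Rmult_le_pos; lra).
    assert (0 <= (x - c) * (- c - y)) by (apply Rmult_le_pos; lra).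
    assert (0 <= (y - c) * (- c - x)) by (apply Rmult_le_pos; lra).
    assert (Hpos : 0 < (T - c) ^ 2 * (T + 2 * c)) by (apply Rmult_lt_0_compat; nra).
    nra.
Qed.

Lemma equal_norms_open_half_plane {I : Type} (l : list I) (u : I -> point) (T : R) :
  0 < T -> (forall i, In i l -> dot (u i) (u i) = T) ->
  (forall i j, In i l -> In j l -> - T / 2 < dot (u i) (u j)) ->
  exists v, forall i, In i l -> 0 < dot v (u i).
Proof.
  intros HT Hnorm Hangle.
  destruct l as [|i0 l0] eqn:El; [exists (0, 0); intros i []|]; rewrite <- El in *.
  destruct (list_argmin (fun ij => dot (u (fst ij)) (u (snd ij))) (list_prod l l))
    as [[p q] [Hpq Hmin]]; [rewrite El; simpl; discriminate|].
  apply in_prod_iff in Hpq as [Hp Hq]; simpl in Hmin.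
  exists (fst (u p) + fst (u q), snd (u p) + snd (u q)); intros k Hk.
  destruct (Rle_lt_dec (dot (fst (u p) + fst (u q), snd (u p) + snd (u q)) (u k)) 0)
    as [Hle|Hlt]; [exfalso|exact Hlt].
  pose proof (Hmin (k, p) (in_prod _ _ _ _ Hk Hp)) as Hkp.
  pose proof (Hmin (k, q) (in_prod _ _ _ _ Hk Hq)) as Hkq.
  simpl in Hkp, Hkq.
  pose proof (gram_plane (u p) (u q) (u k)) as Hgram.
  rewrite (Hnorm p Hp), (Hnorm q Hq), (Hnorm k Hk) in Hgram.
  apply (gram_equal_norms_neq T (dot (u p) (u q)) (dot (u k) (u p)) (dot (u k) (u q)));
    [exact HT | apply Hangle; assumption | exact Hkp | exact Hkq | | exact Hgram].
  unfold dot in *; simpl in Hle; lra.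
Qed.

Lemma sqdist_centers (O : point) (D E : disk) :
  radius D <> 0 -> radius E <> 0 ->
  sqdist (center D) (center E)
  = radius D ^ 2 * rel_sqdist O D + radius E ^ 2 * rel_sqdist O E
    - 2 * radius D * radius E * dot (offset O D) (offset O E).
Proof. intros; unfold rel_sqdist, sqdist, dot, offset; simpl; field; split; assumption. Qed.

Lemma obtuse_offsets_too_far (r s T c : R) :
  0 < r -> 0 < s -> 4 / 3 < T -> c <= - T / 2 ->
  (r + s) ^ 2 < r ^ 2 * T + s ^ 2 * T - 2 * r * s * c.
Proof.
  intros Hr Hs HT Hc.
  assert (0 < (T - 4 / 3) * (r ^ 2 + s ^ 2 + r * s))
    by (apply Rmult_lt_0_compat; nra).
  assert (0 <= r * s * (- T / 2 - c)) by (apply Rmult_le_pos; nra).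
  pose proof (pow2_ge_0 (r - s)).
  nra.
Qed.

Lemma pairwise_meeting_disks_common_point (L : list disk) :
  (forall D, In D L -> 0 < radius D) ->
  (forall D E, In D L -> In E L -> dist (center D) (center E) <= radius D + radius E) ->
  exists O, forall D, In D L -> sqdist O (center D) <= 4 / 3 * radius D ^ 2.
Proof.
  intros Hr Hmeet.
  destruct L as [|D0 L0] eqn:EL; [exists (0, 0); intros D []|]; rewrite <- EL in *.
  assert (HL : L <> []) by (rewrite EL; discriminate).
  destruct (max_rel_sqdist_has_min L HL Hr) as [O HO].
  set (T := max_rel_sqdist L O).
  destruct (Rle_lt_dec T (4 / 3)) as [Hle|Hgt].
  { exists O; intros D HD; apply rel_sqdist_le_iff; [apply Hr, HD|].
    apply Rle_trans with T; [apply max_rel_sqdist_ge, HD | exact Hle]. }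
  exfalso.
  set (active := filter (fun D => if Req_EM_T (rel_sqdist O D) T then true else false) L).
  assert (Hactive : forall D, In D active <-> In D L /\ rel_sqdist O D = T).
  { intros D; unfold active; rewrite filter_In; destruct Req_EM_T; intuition congruence. }
  destruct (equal_norms_open_half_plane active (offset O) T) as [v Hv].
  - lra.
  - intros D [HD HDT]%Hactive.
    rewrite <- rel_sqdist_offset; [exact HDT | specialize (Hr D HD); lra].
  - intros D E [HD HDT]%Hactive [HE HET]%Hactive.
    destruct (Rlt_or_le (- T / 2) (dot (offset O D) (offset O E))) as [Hacute|Hobtuse];
      [exact Hacute | exfalso].
    pose proof (Hr D HD) as HrD; pose proof (Hr E HE) as HrE.
    pose proof (obtuse_offsets_too_far _ _ _ _ HrD HrE Hgt Hobtuse) as Hfar.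
    pose proof (sqdist_centers O D E ltac:(lra) ltac:(lra)) as Hsq.
    rewrite HDT, HET, <- dist_pow2 in Hsq.
    pose proof (pow_incr _ _ 2 (conj (dist_ge_0 _ _) (Hmeet D E HD HE))).
    lra.
  - destruct (max_rel_sqdist_decrease L O v HL Hr) as [P HP].
    { intros D HD HDT; apply Hv, Hactive; split; assumption. }
    pose proof (HO P); lra.
Qed.

Definition edge_disk (e : edge) : disk :=
  {| center := mid (fst e) (snd e); radius := dist (fst e) (snd e) / 2 |}.

Lemma two_local_max_edge_disks_meet (P : list point) (M : list edge) (e f : edge) :
  k_local_max 2 P M -> In e M -> In f M ->
  dist (center (edge_disk e)) (center (edge_disk f))
    <= radius (edge_disk e) + radius (edge_disk f).
Proof.
  intros HM He Hf; destruct e as [a b], f as [c d]; simpl.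
  destruct (classic ((a, b) = (c, d))) as [[= <- <-]|Hne].
  - rewrite dist_refl; pose proof (dist_ge_0 a b); lra.
  - pose proof (two_local_max_exchange P M a b c d HM He Hf Hne).
    pose proof (dist_mid_mid a b c d); lra.
Qed.

Theorem theorem7 (P : list point) (M Mstar : list edge) :
  NoDup P -> Nat.Even (length P) ->
  k_local_max 2 P M -> max_matching P Mstar ->
  weight M >= sqrt (3 / 7) * weight Mstar.
Proof.
  (* Evenness of |P| is implied by the perfect matching M. *)
  intros HP _ HM [HMstar _].
  pose proof HM as [HMP _].
  assert (Hnd : NoDup (endpoints M)) by exact (Permutation_NoDup (Permutation_sym HMP) HP).
  destruct (pairwise_meeting_disks_common_point (map edge_disk M)) as [O HO].
  - intros D ([a b] & <- & Hab)%in_map_iff; simpl.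
    pose proof (dist_gt_0 a b (endpoints_NoDup_neq M a b Hnd Hab)); lra.
  - intros D E (e & <- & He)%in_map_iff (f & <- & Hf)%in_map_iff.
    exact (two_local_max_edge_disks_meet P M e f HM He Hf).
  - assert (Hstar : weight Mstar <= sqrt (7 / 3) * weight M).
    { apply (weight_le_of_star_bound P M Mstar O); [exact HMP | exact HMstar |].
      intros a b Hab; apply dist_sum_le_of_near_mid.
      exact (HO (edge_disk (a, b)) (in_map _ _ _ Hab)). }
    assert (Hk : sqrt (3 / 7) * sqrt (7 / 3) = 1).
    { rewrite <- sqrt_mult_alt by lra.
      replace (3 / 7 * (7 / 3)) with 1 by field; apply sqrt_1. }
    apply Rle_ge; rewrite <- (Rmult_1_l (weight M)), <- Hk, Rmult_assoc.
    apply Rmult_le_compat_l; [apply sqrt_pos | exact Hstar].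
Qed.
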